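(* Let $\Omega,\Omega^*$ be compact metric spaces, $c\in C(\Omega\times\Omega^* )$, and $h_0,h_1\colon[0,+\infty)\to[0,+\infty)$ two finite-valued entropy functions. Let $\mu_1,\mu_2\in\mathcal M_+(\Omega)$, $\nu\in\mathcal M_+(\Omega^* )$, and $\phi_i\in\Phi_{h,c}(\mu_i,\nu)$ for $i=1,2$. Let $U$ be a Borel subset of $\Omega$ and suppose that $\mu_1\leq\mu_2$ on $U$ and $\phi_1\leq\phi_2$ on $\Omega\setminus U$. Then \[ \phi_1\wedge\phi_2\in\Phi_{h,c}(\mu_1,\nu)\quad\text{and}\quad\phi_1\vee\phi_2\in\Phi_{h,c}(\mu_2,\nu). \] Additionally, $-h_0^*(-\phi_1(x))\leq-h_0^*(-\phi_2(x))$ for $x\in\operatorname{supp}(\mu_2-\mu_1)$.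
   Context: An entropy function is a proper, convex, lower semicontinuous $h\colon[0,\infty)\to[0,\infty]$ with $h(s)/s\to+\infty$ as $s\to\infty$; $h^*(r)=\sup_{s\geq0}rs-h(s)$ is its convex conjugate (finite and nondecreasing). For $m\in\mathcal M_+$ (finite positive Borel measures), the internal energy is $H_{h,m}(\rho)=\int h(d\rho/dm)\,dm$ if $\rho$ is positive and $\rho\ll m$, $+\infty$ otherwise. The unbalanced cost is $\mathcal{UT}_{h,c}(\mu,\nu)=\inf_{\pi\in\mathcal M_+(\Omega\times\Omega^* )}H_{h_0,\mu}(\pi_0)+H_{h_1,\nu}(\pi_1)+\int c\,d\pi$, with $\pi_0,\pi_1$ the marginals of $\pi$. With $\phi^c(y)=\sup_{x\in\Omega}\phi(x)-c(x,y)$, by duality $\mathcal{UT}_{h,c}(\mu,\nu)=\sup_{\phi\in C(\Omega)}\int_\Omega-h_0^*(-\phi)\,d\mu-\int_{\Omega^*}h_1^*(\phi^c)\,d\nu$, and $\Phi_{h,c}(\mu,\nu)$ is the set of $\phi\in C(\Omega)$ for which $\int_\Omega-h_0^*(-\phi)\,d\mu-\int_{\Omega^*}h_1^*(\phi^c)\,d\nu=\mathcal{UT}_{h,c}(\mu,\nu)$. $\wedge,\vee$ are pointwise min/max; ''$\mu_1\leq\mu_2$ on $U$'' means $\mu_1(A)\leq\mu_2(A)$ for all Borel $A\subset U$; the support of a signed measure is that of its total variation. *)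

From HB Require Import structures.
From mathcomp Require Import all_boot all_order all_algebra.
From mathcomp Require Import all_classical all_reals all_analysis.

Set Implicit Arguments.
Unset Strict Implicit.
Unset Printing Implicit Defensive.

Import Order.TTheory GRing.Theory Num.Theory.
Import numFieldNormedType.Exports.

Local Open Scope classical_set_scope.
Local Open Scope ring_scope.

(* Nonempty (pointed) metric spaces: mathcomp-analysis measurable types are
   pointed, so the carrier of a Borel measure space must be nonempty. *)
#[short(type="pmetricType")]
HB.structure Definition PMetric (K : numDomainType) :=
  { M of Pointed M & Metric K M }.

Definition borel {R : realType} (T : pmetricType R) : measurableType _ :=
  g_sigma_algebraType (@open T).

(* Finite-valued entropy function h : [0,+oo) -> [0,+oo) (values of h outside
   [0,+oo) are irrelevant): nonnegative, convex, lower semicontinuous on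
   [0,+oo), and superlinear (h(s)/s -> +oo as s -> +oo).  Properness is
   automatic since h is finite-valued. *)
Definition entropy_fun {R : realType} (h : R -> R) : Prop :=
  [/\ (forall s, 0 <= s -> 0 <= h s),
      (forall s t (l : R), 0 <= s -> 0 <= t -> 0 <= l <= 1 ->
          h (l * s + (1 - l) * t) <= l * h s + (1 - l) * h t),
      (forall s, 0 <= s -> forall e : R, 0 < e -> exists2 d : R, 0 < d &
          forall t, 0 <= t -> `|t - s| < d -> h s - e < h t) &
      (h s / s @[s --> +oo] --> +oo)].

Definition conj_fun {R : realType} (h : R -> R) (r : R) : R :=
  sup [set r * s - h s | s in [set s : R | 0 <= s]].

Definition ctrans {R : realType} {X Y : Type} (c : X * Y -> R)
    (phi : X -> R) (y : Y) : R :=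
  sup [set phi x - c (x, y) | x in [set: X]].

Local Open Scope ereal_scope.

(* Internal energy H_{h,m}(rho) = \int h(drho/dm) dm if rho << m, +oo
   otherwise; a density is a nonnegative measurable f with
   rho(A) = \int_A f dm for every measurable A (all such densities agree
   m-a.e., so the infimum below is just the common value, and it is +oo
   when no density exists). *)
Definition is_density {d} {T : measurableType d} {R : realType}
    (m : {measure set T -> \bar R}) (rho : set T -> \bar R) (f : T -> R) :=
  [/\ measurable_fun [set: T] f, (forall x, (0 <= f x)%R) &
      forall A, measurable A -> rho A = \int[m]_(x in A) (f x)%:E].

Definition internal_energy {d} {T : measurableType d} {R : realType}
    (h : R -> R) (m : {measure set T -> \bar R}) (rho : set T -> \bar R)
    : \bar R :=
  ereal_inf [set \int[m]_x (h (f x))%:E | f in is_density m rho].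

(* Unbalanced transport cost UT_{h,c}(mu,nu): infimum over finite positive
   Borel measures pi on Omega x Omega^* (Borel sigma-algebra of the product of
   two compact metric spaces = product of Borel sigma-algebras). *)
Definition UT {R : realType} {X Y : pmetricType R} (h0 h1 : R -> R)
    (c : X * Y -> R)
    (mu : {finite_measure set borel X -> \bar R})
    (nu : {finite_measure set borel Y -> \bar R}) : \bar R :=
  ereal_inf [set internal_energy h0 mu (pushforward pi fst)
                 + internal_energy h1 nu (pushforward pi snd)
                 + \int[pi]_z (c z)%:E
            | pi in [set: {finite_measure set (borel X * borel Y)%type -> \bar R}]].

Definition dual_fun {R : realType} {X Y : pmetricType R} (h0 h1 : R -> R)
    (c : X * Y -> R)
    (mu : {finite_measure set borel X -> \bar R})
    (nu : {finite_measure set borel Y -> \bar R}) (phi : X -> R) : \bar R :=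
  \int[mu]_x (- conj_fun h0 (- phi x))%:E
  - \int[nu]_y (conj_fun h1 (ctrans c phi y))%:E.

Definition Phi {R : realType} {X Y : pmetricType R} (h0 h1 : R -> R)
    (c : X * Y -> R)
    (mu : {finite_measure set borel X -> \bar R})
    (nu : {finite_measure set borel Y -> \bar R}) : set (X -> R) :=
  [set phi | continuous phi /\ dual_fun h0 h1 c mu nu phi = UT h0 h1 c mu nu].

Definition measure_le_on {d} {T : measurableType d} {R : realType}
    (mu1 mu2 : set T -> \bar R) (U : set T) : Prop :=
  forall A, measurable A -> A `<=` U -> mu1 A <= mu2 A.

Definition total_variation {d} {T : measurableType d} {R : realType}
    (s : set T -> R) (N : set T) : \bar R :=
  ereal_sup [set (\sum_(i < n) `|s (A i)|)%:E
            | n in [set: nat] & A in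
              [set A : nat -> set T | (forall i, measurable (A i) /\ A i `<=` N)
                   /\ (forall i j, i <> j -> A i `&` A j = set0)]].

Definition signed_support {R : realType} {X : pmetricType R}
    (mu1 mu2 : {finite_measure set borel X -> \bar R}) : set X :=
  [set x | forall N : set X, open N -> N x ->
     total_variation (fun A : set (borel X) => fine (mu2 A) - fine (mu1 A))%R N
       != 0].

From Pilot Require Import Defs.
From HB Require Import structures.
From mathcomp Require Import all_boot all_order all_algebra.
From mathcomp Require Import all_classical all_reals all_analysis.
From mathcomp Require Import ring lra measurable_realfun.

Import Order.TTheory GRing.Theory Num.Theory.
Import numFieldNormedType.Exports.

Set Implicit Arguments.
Unset Strict Implicit.
Unset Printing Implicit Defensive.

Local Open Scope classical_set_scope.
Local Open Scope ring_scope.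

(* Weak duality: for continuous [phi] and any plan [pi], the Fenchel-Young
   inequality [r s <= h^*(r) + h(s)], integrated against the densities of the
   marginals of [pi], together with [phi x - phi^c y <= c (x, y)], bounds the
   dual functional by [UT].
   Let [F r := - h0^*(- r)] (nondecreasing) and [gap := F phi1 - F (phi1 /\ phi2)],
   which is nonnegative and vanishes off [U].  Since
   [F (phi1 /\ phi2) + F (phi1 \/ phi2) = F phi1 + F phi2] and
   [h1^*((phi1 /\ phi2)^c) + h1^*((phi1 \/ phi2)^c) <= h1^*(phi1^c) + h1^*(phi2^c)],
     dual(mu1, phi1 /\ phi2) + dual(mu2, phi1 \/ phi2)
       >= dual(mu1, phi1) + dual(mu2, phi2) + \int gap d(mu2 - mu1),
   and the last integral is nonnegative because [mu1 <= mu2] on [U].  Weak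
   duality forces equality everywhere, in particular
   [\int gap dmu1 = \int gap dmu2].  If [gap > eps] on an open [N], then
   [eps (mu2 A - mu1 A) <= 0] for every Borel [A] inside [N], so [mu1 = mu2] on
   [N]: [gap] vanishes on [supp (mu2 - mu1)], where therefore [F phi1 <= F phi2]. *)

Section convex_continuity.
Variables (R : realType) (F : R -> R).
Hypothesis F_convex : forall l a b, 0 <= l <= 1 ->
  F (l * a + (1 - l) * b) <= l * F a + (1 - l) * F b.

Let le_right_chord r u : 0 <= u <= 1 -> F (r + u) <= F r + u * (F (r + 1) - F r).
Proof.
move=> u01; have := @F_convex u (r + 1) r u01.
by rewrite (_ : u * (r + 1) + (1 - u) * r = r + u); [lra | ring].
Qed.

Let le_left_chord r u : 0 <= u <= 1 -> F (r - u) <= F r + u * (F (r - 1) - F r).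
Proof.
move=> u01; have := @F_convex u (r - 1) r u01.
by rewrite (_ : u * (r - 1) + (1 - u) * r = r - u); [lra | ring].
Qed.

Let le_midpoint r u : F r <= (F (r + u) + F (r - u)) / 2.
Proof.
have half01 : 0 <= (2^-1 : R) <= 1 by rewrite invr_ge0 ler0n invf_le1 ?ler1n ?ltr0n.
have := @F_convex 2^-1 (r + u) (r - u) half01.
by rewrite (_ : 2^-1 * (r + u) + (1 - 2^-1) * (r - u) = r); [lra | field].
Qed.

(* The upper bound is the chord on the side of [y]; the lower bound is the
   chord on the opposite side, reflected through [r] by the midpoint
   inequality. *)
Lemma convex_local_lipschitz r y : `|y - r| <= 1 ->
  `|F y - F r| <= (`|F (r + 1) - F r| + `|F (r - 1) - F r|) * `|y - r|.
Proof.
set C := `|F (r + 1) - F r| + `|F (r - 1) - F r|.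
have C1 : F (r + 1) - F r <= C by apply: le_trans (ler_norm _) _; rewrite /C lerDl.
have C2 : F (r - 1) - F r <= C by apply: le_trans (ler_norm _) _; rewrite /C lerDr.
have [ry|yr] := leP r y.
  rewrite ger0_norm ?subr_ge0 // => u1.
  set u := y - r; have -> : y = r + u by rewrite /u; ring.
  have u01 : 0 <= u <= 1 by rewrite u1 subr_ge0 ry.
  have := le_right_chord r u01; have := le_left_chord r u01.
  have := le_midpoint r u; have := ler_wpM2l (proj1 (andP u01)) C1.
  have := ler_wpM2l (proj1 (andP u01)) C2; rewrite ler_norml; nra.
rewrite ltr0_norm ?subr_lt0 // => u1.
set u := - (y - r); have -> : y = r - u by rewrite /u; ring.
have u01 : 0 <= u <= 1 by rewrite u1 oppr_ge0 subr_le0 ltW.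
have := le_right_chord r u01; have := le_left_chord r u01.
have := le_midpoint r u; have := ler_wpM2l (proj1 (andP u01)) C1.
have := ler_wpM2l (proj1 (andP u01)) C2; rewrite ler_norml; nra.
Qed.

Lemma convex_continuous : continuous F.
Proof.
move=> r; apply/cvgrPdist_lt => e e0.
set C := `|F (r + 1) - F r| + `|F (r - 1) - F r|.
have C0 : 0 <= C by rewrite /C addr_ge0.
have d0 : 0 < Num.min 1 (e / (C + 1)) by rewrite lt_min ltr01 divr_gt0 // ltr_wpDl.
near=> y.
have : `|r - y| < Num.min 1 (e / (C + 1)).
  by near: y; exact: (@cvgr_dist_lt _ _ _ (nbhs r) _ id r cvg_id _ d0).
rewrite lt_min [`|r - y|]distrC => /andP[y1 ye].
rewrite distrC; apply: le_lt_trans (convex_local_lipschitz (ltW y1)) _.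
apply: (le_lt_trans (ler_wpM2l C0 (ltW ye))).
by rewrite mulrC -mulrA gtr_pMr // mulrC ltr_pdivrMr ?ltr_wpDl // mul1r ltrDl.
Unshelve. all: by end_near.
Qed.

End convex_continuity.

Section entropy_conjugate.
Variables (R : realType) (h : R -> R).
Hypothesis h_entropy : entropy_fun h.

Lemma conj_fun_has_ubound r :
  has_ubound [set r * s - h s | s in [set s : R | 0 <= s]].
Proof.
case: h_entropy => h_ge0 _ _ h_superlinear.
have [M [_ HM]] := cvgry_ge h_superlinear r.
exists (`|r| * (`|M| + 1)) => _ [s /= s0 <-].
have hs0 := h_ge0 s s0; have M_le := ler_norm M; have M0 := normr_ge0 M.
have [sM|Ms] := leP s (`|M| + 1).
  by have := ler_wpM2r s0 (ler_norm r); have := ler_wpM2l (normr_ge0 r) sM; lra.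
have /HM : M < s by lra.
rewrite ler_pdivlMr; last by lra.
have := mulr_ge0 (normr_ge0 r) (addr_ge0 M0 ler01); lra.
Qed.

Lemma fenchel_young r s : 0 <= s -> r * s - h s <= conj_fun h r.
Proof. by move=> s0; apply: ub_le_sup (conj_fun_has_ubound r) _ _; exists s. Qed.

Lemma conj_fun_le_ub r B : (forall s, 0 <= s -> r * s - h s <= B) ->
  conj_fun h r <= B.
Proof.
move=> HB; apply: ge_sup; first by exists (r * 0 - h 0); exists 0 => /=.
by move=> _ [s s0 <-]; apply: HB.
Qed.

Lemma le_conj_fun : {homo conj_fun h : a b / a <= b}.
Proof.
move=> a b ab; apply: conj_fun_le_ub => s s0.
by apply: le_trans _ (fenchel_young b s0); rewrite lerD2r ler_wpM2r.
Qed.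

Lemma conj_fun_convex l a b : 0 <= l <= 1 ->
  conj_fun h (l * a + (1 - l) * b) <= l * conj_fun h a + (1 - l) * conj_fun h b.
Proof.
move=> /andP[l0 l1]; apply: conj_fun_le_ub => s s0.
rewrite (_ : _ * s - h s = l * (a * s - h s) + (1 - l) * (b * s - h s)); last by ring.
by apply: lerD; apply: ler_wpM2l; rewrite ?subr_ge0 // fenchel_young.
Qed.

Lemma continuous_conj_fun : continuous (conj_fun h).
Proof. exact: convex_continuous conj_fun_convex. Qed.

Lemma continuous_conj_opp (T : topologicalType) (phi : T -> R) :
  continuous phi -> continuous (fun x => conj_fun h (- phi x)).
Proof.
move=> phic x; apply: (@continuous_comp _ _ _ (fun x => - phi x) (conj_fun h)).
  exact: continuousN (phic x).
exact: continuous_conj_fun.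
Qed.

Lemma normr_conj_fun_le r B : `|r| <= B ->
  `|conj_fun h r| <= `|conj_fun h (- B)| + `|conj_fun h B|.
Proof.
rewrite ler_norml => /andP[lo hi].
have := le_conj_fun lo; have := le_conj_fun hi.
have := ler_norm (conj_fun h (- B)); have := ler_norm (- conj_fun h (- B)).
have := ler_norm (conj_fun h B); have := normr_ge0 (conj_fun h B).
rewrite normrN ler_norml; lra.
Qed.

End entropy_conjugate.

Section borel_measurable.
Variable R : realType.

Lemma open_gt_continuous (T : topologicalType) (f : T -> R) t :
  continuous f -> open [set x | t < f x].
Proof.
move=> fc; rewrite (_ : [set x | t < f x] = f @^-1` `]t, +oo[); last first.
  by apply/seteqP; split => x /=; rewrite in_itv /= andbT.
by apply: open_comp; [move=> x _; exact: fc | exact: rray_open].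
Qed.

Lemma compact_continuous_bounded (T : topologicalType) (f : T -> R) :
  compact [set: T] -> continuous f -> exists M, forall x, `|f x| <= M.
Proof.
move=> cT fc.
have [M [_ HM]] := compact_bounded (continuous_compact (continuous_subspaceT fc) cT).
by exists (`|M| + 1) => x; apply: HM; [rewrite ltr_pwDr // ler_norm | exists x].
Qed.

Variable T : pmetricType R.

Lemma open_superlevel_measurable (f : T -> R) :
  (forall t, open [set x | t < f x]) -> measurable_fun [set: borel T] f.
Proof.
move=> fo.
apply: (@measurability _ _ (borel T) R setT f (@RGenOInfty.G R)).
  exact: RGenOInfty.measurableE.
move=> _ [_ [t ->] <-]; apply: sub_sigma_algebra.
rewrite setTI (_ : _ @^-1` _ = [set x | t < f x]); first exact: fo.
by apply/seteqP; split => x /=; rewrite in_itv /= andbT.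
Qed.

Lemma continuous_borel_measurable (f : T -> R) :
  continuous f -> measurable_fun [set: borel T] f.
Proof. by move=> fc; apply: open_superlevel_measurable => t; exact: open_gt_continuous. Qed.

End borel_measurable.

Section ctrans.
Variables (R : realType) (X Y : pmetricType R) (c : X * Y -> R).
Implicit Types phi psi : X -> R.

Lemma ctrans_ge phi B : (forall x y, phi x - c (x, y) <= B) ->
  forall x y, phi x - c (x, y) <= ctrans c phi y.
Proof.
move=> hB x y; apply: ub_le_sup; last by exists x.
by exists B => _ [x' _ <-].
Qed.

Lemma ctrans_le phi y B : (forall x, phi x - c (x, y) <= B) -> ctrans c phi y <= B.
Proof.
move=> hB; apply: ge_sup; first by exists (phi point - c (point, y)), point.
by move=> _ [x _ <-].
Qed.

(* [phi^c] is a supremum of continuous functions of [y], hence lower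
   semicontinuous. *)
Lemma open_ctrans_gt phi B : continuous c -> (forall x y, phi x - c (x, y) <= B) ->
  forall t, open [set y | t < ctrans c phi y].
Proof.
move=> cc hB t.
have -> : [set y | t < ctrans c phi y] =
    \bigcup_(x in [set: X]) [set y | t < phi x - c (x, y)].
  apply/seteqP; split => y /=.
    by move=> /sup_gt [|_ [x _ <-] tx]; [exists (phi point - c (point, y)), point | exists x].
  by move=> [x _ tx]; apply: lt_le_trans tx _; exact: ctrans_ge hB x y.
apply: bigcup_open => x _; apply: open_gt_continuous => y.
apply: (@continuousB _ _ _ (fun=> phi x) (fun y => c (x, y))); first exact: cvg_cst.
apply: (@continuous_comp _ _ _ (fun y => (x, y)) c); last exact: cc.
by apply: cvg_pair; [exact: cvg_cst | exact: cvg_id].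
Qed.

Hypotheses (cX : compact [set: X]) (cY : compact [set: Y]) (cc : continuous c).

Lemma ctrans_bounded phi : continuous phi -> exists B,
  (forall x y, phi x - c (x, y) <= B) /\ forall y, `|ctrans c phi y| <= B.
Proof.
move=> phic.
have [K cK] : exists K, forall z, `|c z| <= K.
  by apply: compact_continuous_bounded cc; rewrite -setXTT; exact: compact_setX.
have [M phiM] := compact_continuous_bounded cX phic.
have hB x y : phi x - c (x, y) <= M + K.
  by have := phiM x; have := cK (x, y); rewrite !ler_norml; lra.
exists (M + K); split => // y; rewrite ler_norml ctrans_le // andbT.
have := ctrans_ge hB point y; have := phiM point; have := cK (point, y).
by rewrite !ler_norml; lra.
Qed.

Lemma ctrans_measurable phi : continuous phi ->
  measurable_fun [set: borel Y] (ctrans c phi).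
Proof.
move=> /ctrans_bounded[B [hB _]].
by apply: open_superlevel_measurable; exact: open_ctrans_gt cc hB.
Qed.

Lemma le_ctrans phi psi : continuous psi -> (forall x, phi x <= psi x) ->
  forall y, ctrans c phi y <= ctrans c psi y.
Proof.
move=> /ctrans_bounded[B [hB _]] le y; apply: ctrans_le => x.
by apply: le_trans (ctrans_ge hB x y); rewrite lerD2r.
Qed.

Lemma ctrans_max_le phi psi : continuous phi -> continuous psi ->
  forall y, ctrans c (fun x => Num.max (phi x) (psi x)) y <=
            Num.max (ctrans c phi y) (ctrans c psi y).
Proof.
move=> /ctrans_bounded[B1 [hB1 _]] /ctrans_bounded[B2 [hB2 _]] y.
apply: ctrans_le => x; rewrite le_max.
by case: (leP (phi x) (psi x)) => _; rewrite ?(ctrans_ge hB1) ?(ctrans_ge hB2) ?orbT.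
Qed.

End ctrans.

Section integral_comparison.
Local Open Scope ereal_scope.
Variables (d : measure_display) (T : measurableType d) (R : realType).
Import HBNNSimple.

Lemma measure_le_on_integral (m1 m2 : {measure set T -> \bar R}) U (g : T -> \bar R) :
  measure_le_on m1 m2 U -> (forall x, 0 <= g x) -> (forall x, ~ U x -> g x = 0) ->
  \int[m1]_x g x <= \int[m2]_x g x.
Proof.
move=> m12 g0 gU; rewrite !ge0_integralE //=.
apply: ge_ereal_sup => _ [k /= kg <-].
apply: le_ereal_sup_tmp; exists (sintegral m2 k); first by exists k.
rewrite !sintegralE; apply: lee_fsum => // r [t _ <-].
have [->|kt0] := eqVneq (k t) 0%R; first by rewrite !mul0e.
apply: lee_wpmul2l; first by rewrite lee_fin fun_ge0.
apply: m12; first by rewrite -[X in measurable X]setTI; apply: measurable_funP.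
move=> x /= kx; apply/not_notP => Ux.
have := kg x; rewrite patch_setT gU // lee_fin kx => kt_le0.
by move: kt0; rewrite eq_le kt_le0 fun_ge0.
Qed.

(* No measurability is needed: the integral of a nonnegative function is the
   supremum of the integrals of the simple functions below it. *)
Let ge0_le_integral_any (m : {measure set T -> \bar R}) (f g : T -> \bar R) :
  (forall x, 0 <= f x) -> (forall x, f x <= g x) ->
  \int[m]_x f x <= \int[m]_x g x.
Proof.
move=> f0 fg; have g0 x : 0 <= g x := le_trans (f0 x) (fg x).
rewrite !ge0_integralE //; apply: ge_ereal_sup => _ [k /= kf <-].
apply: ereal_sup_ubound; exists k => //= x.
by apply: le_trans (kf x) _; rewrite !patch_setT.
Qed.

Lemma le_integral_any (m : {measure set T -> \bar R}) (f g : T -> \bar R) :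
  (forall x, f x <= g x) -> \int[m]_x f x <= \int[m]_x g x.
Proof.
move=> fg; rewrite [X in X <= _]integralE [X in _ <= X]integralE.
apply: leeB; apply: ge0_le_integral_any => x.
- exact: funepos_ge0.
- by rewrite !funeposE; apply: le_max2.
- exact: funeneg_ge0.
- by rewrite !funenegE; apply: le_max2; rewrite // leeN2.
Qed.

Lemma bounded_integrable (m : {measure set T -> \bar R}) (f : T -> R) (B : R) :
  m [set: T] < +oo -> measurable_fun [set: T] f -> (forall x, `|f x| <= B)%R ->
  m.-integrable [set: T] (EFin \o f).
Proof.
move=> mfin mf fB; apply: measurable_bounded_integrable => //.
exists B; split; first exact: num_real.
by move=> M BM x _ /=; apply: le_trans (fB x) _; exact: ltW.
Qed.

End integral_comparison.

Section integral_density.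
Local Open Scope ereal_scope.
Variables (d : measure_display) (T : measurableType d) (R : realType).
Variables (m : {finite_measure set T -> \bar R}) (rho : {measure set T -> \bar R}).
Variable g : T -> R.
Hypotheses (rho_fin : rho [set: T] < +oo) (mg : measurable_fun [set: T] g)
  (g_ge0 : forall x, (0 <= g x)%R)
  (rhoE : forall A, measurable A -> rho A = \int[m]_(x in A) (g x)%:E).

(* [g] agrees [m]-a.e. with the Radon-Nikodym derivative of [rho]; restricting
   [rho] to [setT] only equips it with a finite-measure structure. *)
Lemma integral_density (f : T -> \bar R) : rho.-integrable [set: T] f ->
  \int[m]_x (f x * (g x)%:E) = \int[rho]_x f x.
Proof.
pose rhoF := mfrestr measurableT rho_fin.
have rhoFE A : measurable A -> rhoF A = rho A.
  by move=> mA; rewrite /rhoF /mfrestr /mrestr setIT.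
move=> rf; rewrite [RHS](eq_measure_integral rhoF) => [|A mA _]; last exact/esym/rhoFE.
have {}rf : rhoF.-integrable [set: T] f.
  apply/integrableP; split; first exact: measurable_int rf.
  rewrite (eq_measure_integral rho) => [|A mA _]; last exact: rhoFE.
  by case/integrableP: rf.
have rho_m : rhoF `<< m.
  move=> N mN A mA AN; rewrite rhoFE // rhoE // null_set_integral //; last exact: mN.
  exact/measurable_EFinP/measurable_funTS.
rewrite -(Radon_Nikodym_change_of_variables rho_m) //.
apply: ae_eq_integral => //.
- by apply: emeasurable_funM; [exact: measurable_int rf | exact/measurable_EFinP].
- apply: emeasurable_funM; first exact: measurable_int rf.
  exact: measurable_int (Radon_Nikodym_integrable _).
apply: ae_eqe_mul2l; apply: integral_ae_eq => //.
  apply/integrableP; split; first exact/measurable_EFinP.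
  by under eq_integral do rewrite /= ger0_norm //; rewrite -rhoE.
by move=> E _ mE; rewrite -Radon_Nikodym_integral // -rhoE //; exact/esym/rhoFE.
Qed.

End integral_density.

Section Rintegral_measure_le_on.
Variables (d : measure_display) (T : measurableType d) (R : realType).
Implicit Types (U A : set T) (g : T -> R).

Lemma RintegralN (m : {measure set T -> \bar R}) g :
  m.-integrable [set: T] (EFin \o g) -> \int[m]_x (- g x) = - \int[m]_x g x.
Proof.
move=> gi; rewrite -mulN1r -RintegralZl //.
by apply: eq_Rintegral => x _; rewrite mulN1r.
Qed.

Lemma le_Rintegral_on (mu1 mu2 : {measure set T -> \bar R}) U g :
  measure_le_on mu1 mu2 U ->
  mu1.-integrable [set: T] (EFin \o g) -> mu2.-integrable [set: T] (EFin \o g) ->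
  (forall x, 0 <= g x) -> (forall x, ~ U x -> g x = 0) ->
  \int[mu1]_x g x <= \int[mu2]_x g x.
Proof.
move=> mle i1 i2 g0 gU; rewrite /Rintegral fine_le //; try exact: integrable_fin_num.
by apply: measure_le_on_integral mle _ _ => x; rewrite ?lee_fin // => /gU ->.
Qed.

(* Apply [le_Rintegral_on] to [g - eps 1_A], which is still nonnegative and
   vanishes off [U]. *)
Lemma measure_eq_on_superlevel (mu1 mu2 : {finite_measure set T -> \bar R}) U g
    eps A :
  measure_le_on mu1 mu2 U ->
  mu1.-integrable [set: T] (EFin \o g) -> mu2.-integrable [set: T] (EFin \o g) ->
  (forall x, 0 <= g x) -> (forall x, ~ U x -> g x = 0) ->
  \int[mu2]_x g x <= \int[mu1]_x g x ->
  0 < eps -> measurable A -> A `<=` [set x | eps <= g x] -> mu1 A = mu2 A.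
Proof.
move=> mle i1 i2 g0 gU le21 eps0 mA Ag.
have AU : A `<=` U.
  by move=> x /Ag /=; apply: contraPP => /gU ->; apply/negP; rewrite -ltNge.
pose k x := g x - eps * \1_A x.
have intk (mu : {finite_measure set T -> \bar R}) :
    mu.-integrable [set: T] (EFin \o g) -> mu.-integrable [set: T] (EFin \o k).
  move=> ig; have := integrableB measurableT ig
    (integrableZl measurableT eps (integrable_indic mu mA)).
  by apply: eq_integrable => // x _; rewrite /= EFinB EFinM.
have kE (mu : {finite_measure set T -> \bar R}) :
    mu.-integrable [set: T] (EFin \o g) ->
    \int[mu]_x k x = \int[mu]_x g x - eps * fine (mu A).
  move=> ig; rewrite RintegralB //; last exact: integrableZl (integrable_indic mu mA).
  rewrite RintegralZl //; last exact: integrable_indic.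
  by rewrite /Rintegral integral_indic // setIT.
have k_ge0 x : 0 <= k x.
  rewrite /k indicE; have [/set_mem/Ag /= ?|_] := boolP (x \in A).
    by rewrite mulr1 subr_ge0.
  by rewrite mulr0 subr0.
have k_offU x : ~ U x -> k x = 0.
  by move=> nUx; rewrite /k gU // indicE memNset ?mulr0 ?subr0 // => /AU.
have := le_Rintegral_on mle (intk _ i1) (intk _ i2) k_ge0 k_offU.
rewrite !kE // => le_k.
have le_fin : fine (mu2 A) <= fine (mu1 A) by rewrite -(ler_pM2l eps0); lra.
apply/eqP; rewrite eq_le (mle A mA AU) /=.
by rewrite -(fineK (fin_num_measure mu2 _ mA)) -(fineK (fin_num_measure mu1 _ mA)) lee_fin.
Qed.

End Rintegral_measure_le_on.

Lemma total_variation_eq0 (d : measure_display) (T : measurableType d) (R : realType)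
    (s : set T -> R) N :
  (forall A, measurable A -> A `<=` N -> s A = 0) -> Defs.total_variation s N = 0%E.
Proof.
move=> sN; apply/eqP; rewrite eq_le; apply/andP; split.
  apply: ge_ereal_sup => _ [n _ [A [HA _] <-]]; rewrite lee_fin big1 // => i _.
  by have [mAi AiN] := HA i; rewrite sN // normr0.
apply: ereal_sup_ubound; exists 0%N => //; exists (fun=> set0); last by rewrite big_ord0.
by split => [i|i j _]; [split | rewrite setI0].
Qed.

Lemma not_signed_support (R : realType) (X : pmetricType R)
    (mu1 mu2 : {finite_measure set borel X -> \bar R}) (N : set (borel X)) x :
  open N -> N x -> (forall A, measurable A -> A `<=` N -> mu1 A = mu2 A) ->
  ~ signed_support mu1 mu2 x.
Proof.
move=> oN Nx eqN /(_ N oN Nx)/negP; apply; apply/eqP.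
by apply: total_variation_eq0 => A mA AN; rewrite eqN // subrr.
Qed.

Lemma eq0_on_signed_support (R : realType) (X : pmetricType R)
    (mu1 mu2 : {finite_measure set borel X -> \bar R}) (U : set (borel X))
    (g : X -> R) :
  measure_le_on mu1 mu2 U -> continuous g ->
  mu1.-integrable [set: X] (EFin \o g) -> mu2.-integrable [set: X] (EFin \o g) ->
  (forall x, 0 <= g x) -> (forall x, ~ U x -> g x = 0) ->
  \int[mu2]_x g x <= \int[mu1]_x g x ->
  forall x, signed_support mu1 mu2 x -> g x = 0.
Proof.
move=> mle gc i1 i2 g_ge0 g_offU g_le x x_supp.
apply/eqP; rewrite eq_le g_ge0 andbT leNgt; apply/negP => gx_gt0.
apply: (not_signed_support (N := [set y | g x / 2 < g y]) _ _ _ x_supp).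
- exact: open_gt_continuous gc.
- by rewrite /= ltr_pdivrMr // ltr_pMr // ltr1n.
move=> A mA AN.
apply: (measure_eq_on_superlevel (eps := g x / 2) mle i1 i2 g_ge0 g_offU g_le _ mA).
  by rewrite divr_gt0.
by move=> y /AN /ltW.
Qed.

Section compact_integrable.
Variables (R : realType) (T : pmetricType R).
Hypothesis cT : compact [set: T].

Lemma continuous_integrable (mu : {finite_measure set borel T -> \bar R}) (g : T -> R) :
  continuous g -> mu.-integrable [set: T] (EFin \o g).
Proof.
move=> gc; have [B gB] := compact_continuous_bounded cT gc.
apply: bounded_integrable _ (continuous_borel_measurable gc) gB.
by rewrite ltey_eq fin_num_measure.
Qed.

End compact_integrable.

Section internal_energy_bound.
Local Open Scope ereal_scope.
Variables (d : measure_display) (T : measurableType d) (R : realType) (h : R -> R).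
Hypothesis h_entropy : entropy_fun h.

(* Fenchel-Young [u f <= h^*(u) + h(f)], integrated against [m] for each
   density [f] of [rho]. *)
Lemma le_internal_energy (m : {finite_measure set T -> \bar R})
    (rho : {measure set T -> \bar R}) (u : T -> R) (B : R) :
  rho [set: T] < +oo -> measurable_fun [set: T] u -> (forall x, `|u x| <= B)%R ->
  (\int[rho]_x u x - \int[m]_x conj_fun h (u x))%:E <= internal_energy h m rho.
Proof.
move=> rho_fin mu uB; apply/ereal_infP => _ [f [mf f0 rhoE] <-].
have m_fin : m [set: T] < +oo by rewrite ltey_eq fin_num_measure.
have intf : m.-integrable [set: T] (EFin \o f).
  apply/integrableP; split; first exact/measurable_EFinP.
  by under eq_integral do rewrite /= ger0_norm //; rewrite -rhoE.
have intuf : m.-integrable [set: T] (EFin \o (fun x => u x * f x)%R).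
  apply: (le_integrable measurableT _ _ (integrableZl measurableT B intf)).
    exact/measurable_EFinP/measurable_funM.
  move=> x _ /=; rewrite lee_fin !normrM ler_wpM2r //.
  by rewrite (le_trans (uB x)) // ler_norm.
have intc : m.-integrable [set: T] (EFin \o (fun x => conj_fun h (u x))).
  apply: bounded_integrable m_fin _ (fun x => normr_conj_fun_le h_entropy (uB x)).
  exact: measurableT_comp (continuous_measurable_fun (continuous_conj_fun h_entropy)) mu.
have intu : rho.-integrable [set: T] (EFin \o u) := bounded_integrable rho_fin mu uB.
have -> : (\int[rho]_x u x = \int[m]_x (u x * f x))%R.
  congr fine; rewrite -(integral_density rho_fin mf f0 rhoE intu).
  by apply: eq_integral => x _; rewrite EFinM.
rewrite EFinB !fineK -?integralB_EFin //; try exact: integrable_fin_num.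
apply: le_integral_any => x; rewrite lee_fin.
by have := fenchel_young h_entropy (u x) (f0 x); lra.
Qed.

End internal_energy_bound.

Definition Rdual_fun {R : realType} {X Y : pmetricType R} (h0 h1 : R -> R)
    (c : X * Y -> R) (mu : {finite_measure set borel X -> \bar R})
    (nu : {finite_measure set borel Y -> \bar R}) (phi : X -> R) : R :=
  \int[mu]_x (- conj_fun h0 (- phi x)) - \int[nu]_y conj_fun h1 (ctrans c phi y).

Section weak_duality.
Variables (R : realType) (X Y : pmetricType R) (c : X * Y -> R) (h0 h1 : R -> R).
Variables (mu : {finite_measure set borel X -> \bar R})
  (nu : {finite_measure set borel Y -> \bar R}).
Hypotheses (cX : compact [set: X]) (cY : compact [set: Y]) (cc : continuous c)
  (h0_entropy : entropy_fun h0) (h1_entropy : entropy_fun h1).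

Lemma conj_ctrans_integrable (phi : X -> R) : continuous phi ->
  nu.-integrable [set: Y] (EFin \o (fun y => conj_fun h1 (ctrans c phi y))).
Proof.
move=> phic; have [B [_ psiB]] := ctrans_bounded cX cY cc phic.
have nu_fin : (nu [set: Y] < +oo)%E by rewrite ltey_eq fin_num_measure.
have mpsi := ctrans_measurable cX cY cc phic.
have mconj := continuous_measurable_fun (continuous_conj_fun h1_entropy).
exact: bounded_integrable nu_fin (measurableT_comp mconj mpsi)
  (fun y => normr_conj_fun_le h1_entropy (psiB y)).
Qed.

Lemma Rdual_funE (phi : X -> R) : continuous phi ->
  dual_fun h0 h1 c mu nu phi = (Rdual_fun h0 h1 c mu nu phi)%:E.
Proof.
move=> phic; rewrite /dual_fun /Rdual_fun EFinB !fineK //; apply: integrable_fin_num => //.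
  exact: conj_ctrans_integrable.
by apply: (continuous_integrable cX) => x; apply: cvgN; exact: continuous_conj_opp.
Qed.

Lemma dual_fun_le_UT (phi : X -> R) : continuous phi ->
  (dual_fun h0 h1 c mu nu phi <= UT h0 h1 c mu nu)%E.
Proof.
move=> phic; rewrite Rdual_funE //; apply/ereal_infP => _ [pi _ <-].
have [B [hB psiB]] := ctrans_bounded cX cY cc phic.
have [M phiM] := compact_continuous_bounded cX phic.
have pi_fin : (pi [set: X * Y] < +oo)%E by rewrite ltey_eq fin_num_measure.
have mphi := continuous_borel_measurable phic.
have mpsi := ctrans_measurable cX cY cc phic.
have mphi1 : measurable_fun [set: (borel X * borel Y)%type] (fun z => phi z.1).
  exact: measurableT_comp mphi measurable_fst.
have mpsi2 : measurable_fun [set: (borel X * borel Y)%type] (fun z => ctrans c phi z.2).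
  exact: measurableT_comp mpsi measurable_snd.
have iphi1 := bounded_integrable pi_fin mphi1 (fun z => phiM z.1).
have ipsi2 := bounded_integrable pi_fin mpsi2 (fun z => psiB z.2).
have mnphi : measurable_fun [set: borel X] (fun x => - phi x) := measurable_funN mphi.
have iconj0 : mu.-integrable [set: X] (EFin \o (fun x => conj_fun h0 (- phi x))).
  by apply: (continuous_integrable cX) => x; exact: continuous_conj_opp.
have E0 : ((\int[pi]_z (- phi z.1) - \int[mu]_x conj_fun h0 (- phi x))%:E <=
    internal_energy h0 mu (pushforward pi fst))%E.
  have := @le_internal_energy _ _ _ _ h0_entropy mu (pushforward pi fst) (fun x => - phi x) M.
  move=> /(_ measurable_fst); rewrite {1}/Rintegral integral_pushforward ?preimage_setT //.
  - by apply => // x; rewrite normrN.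
  - exact/measurable_EFinP/measurable_funN.
  - have := integrableN iphi1.
    by apply: eq_integrable => // z _; rewrite /= EFinN.
have E1 : ((\int[pi]_z ctrans c phi z.2 - \int[nu]_y conj_fun h1 (ctrans c phi y))%:E <=
    internal_energy h1 nu (pushforward pi snd))%E.
  have := @le_internal_energy _ _ _ _ h1_entropy nu (pushforward pi snd) (ctrans c phi) B.
  move=> /(_ measurable_snd); rewrite {1}/Rintegral integral_pushforward ?preimage_setT //.
  - by apply.
  - by apply/measurable_EFinP.
have E2 : ((\int[pi]_z phi z.1 - \int[pi]_z ctrans c phi z.2)%:E <=
    \int[pi]_z (c z)%:E)%E.
  rewrite EFinB /Rintegral !fineK ?(integrable_fin_num measurableT) //.
  rewrite -integralB_EFin //; apply: le_integral_any => -[x y].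
  by rewrite lee_fin; have := ctrans_ge hB x y; lra.
apply: le_trans (leeD (leeD E0 E1) E2); rewrite -!EFinD lee_fin /Rdual_fun.
have /= := RintegralN iphi1; have /= := RintegralN iconj0.
lra.
Qed.

End weak_duality.

Section dual_lattice.
Variables (R : realType) (X Y : pmetricType R) (c : X * Y -> R) (h0 h1 : R -> R).
Variables (mu1 mu2 : {finite_measure set borel X -> \bar R})
  (nu : {finite_measure set borel Y -> \bar R}).
Hypotheses (cX : compact [set: X]) (cY : compact [set: Y]) (cc : continuous c)
  (h0_entropy : entropy_fun h0) (h1_entropy : entropy_fun h1).
Variables (phi1 phi2 : X -> R) (U : set (borel X)).
Hypotheses (phi1c : continuous phi1) (phi2c : continuous phi2)
  (mle : measure_le_on mu1 mu2 U) (le_offU : forall x, ~ U x -> phi1 x <= phi2 x).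

Let phi_min x := Num.min (phi1 x) (phi2 x).
Let phi_max x := Num.max (phi1 x) (phi2 x).
Let gap x := conj_fun h0 (- phi_min x) - conj_fun h0 (- phi1 x).

Let minc : continuous phi_min := min_fun_continuous phi1c phi2c.
Let maxc : continuous phi_max := max_fun_continuous phi1c phi2c.

Let gap_ge0 x : 0 <= gap x.
Proof. by rewrite subr_ge0 le_conj_fun // lerN2 ge_min lexx. Qed.

Let gap_offU x : ~ U x -> gap x = 0.
Proof. by move/le_offU => le12; rewrite /gap /phi_min min_l // subrr. Qed.

Let continuous_gap : continuous gap.
Proof.
have Fmin := continuous_conj_opp h0_entropy minc.
have F1 := continuous_conj_opp h0_entropy phi1c.
by move=> x; rewrite /continuous_at; exact: cvgB (Fmin x) (F1 x).
Qed.

Let integrable_gap (mu : {finite_measure set borel X -> \bar R}) :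
  mu.-integrable [set: X] (EFin \o gap).
Proof. by apply: (continuous_integrable cX); exact: continuous_gap. Qed.

Lemma conj_ctrans_min_add_max y :
  conj_fun h1 (ctrans c phi_min y) + conj_fun h1 (ctrans c phi_max y) <=
  conj_fun h1 (ctrans c phi1 y) + conj_fun h1 (ctrans c phi2 y).
Proof.
have min1 : ctrans c phi_min y <= ctrans c phi1 y.
  by apply: (le_ctrans cX cY cc phi1c) => x; rewrite ge_min lexx.
have min2 : ctrans c phi_min y <= ctrans c phi2 y.
  by apply: (le_ctrans cX cY cc phi2c) => x; rewrite ge_min lexx orbT.
have max_le := ctrans_max_le cX cY cc phi1c phi2c y.
have [le12|/ltW le21] := leP (ctrans c phi1 y) (ctrans c phi2 y).
  by rewrite max_r // in max_le; apply: lerD; exact: le_conj_fun.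
rewrite max_l // in max_le; rewrite [leRHS]addrC.
by apply: lerD; exact: le_conj_fun.
Qed.

(* With [F r = - h0^*(- r)], [F (phi1 /\ phi2) + F (phi1 \/ phi2) = F phi1 + F phi2]
   pointwise, so the [h0]-terms only move by the integrals of [gap]; the
   [h1]-terms decrease by [conj_ctrans_min_add_max]. *)
Lemma Rdual_min_add_max :
  Rdual_fun h0 h1 c mu1 nu phi1 + Rdual_fun h0 h1 c mu2 nu phi2 +
    (\int[mu2]_x gap x - \int[mu1]_x gap x) <=
  Rdual_fun h0 h1 c mu1 nu phi_min + Rdual_fun h0 h1 c mu2 nu phi_max.
Proof.
have iF (mu : {finite_measure set borel X -> \bar R}) phi : continuous phi ->
    mu.-integrable [set: X] (EFin \o (fun x => - conj_fun h0 (- phi x))).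
  move=> phic; apply: (continuous_integrable cX) => x; apply: cvgN.
  exact: continuous_conj_opp.
have iG (phi : X -> R) : continuous phi ->
    nu.-integrable [set: Y] (EFin \o (fun y => conj_fun h1 (ctrans c phi y))).
  exact: conj_ctrans_integrable.
have iGG phi psi : continuous phi -> continuous psi -> nu.-integrable [set: Y]
    (EFin \o (fun y => conj_fun h1 (ctrans c phi y) + conj_fun h1 (ctrans c psi y))).
  move=> phic psic; have := integrableD measurableT (iG _ phic) (iG _ psic).
  by apply: eq_integrable => // y _; rewrite /= EFinD.
have e1 : \int[mu1]_x (- conj_fun h0 (- phi_min x)) =
    \int[mu1]_x (- conj_fun h0 (- phi1 x)) - \int[mu1]_x gap x.
  rewrite -RintegralB //; [|exact: iF phi1c|exact: integrable_gap].
  by apply: eq_Rintegral => x _; rewrite /gap; ring.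
have e2 : \int[mu2]_x (- conj_fun h0 (- phi_max x)) =
    \int[mu2]_x (- conj_fun h0 (- phi2 x)) + \int[mu2]_x gap x.
  rewrite -RintegralD //; [|exact: iF phi2c|exact: integrable_gap].
  apply: eq_Rintegral => x _; rewrite /gap /phi_min /phi_max.
  by case: leP => _; ring.
have g : \int[nu]_y (conj_fun h1 (ctrans c phi_min y) + conj_fun h1 (ctrans c phi_max y)) <=
    \int[nu]_y (conj_fun h1 (ctrans c phi1 y) + conj_fun h1 (ctrans c phi2 y)).
  apply: le_Rintegral => //; [exact: iGG minc maxc|exact: iGG phi1c phi2c|].
  by move=> y _; exact: conj_ctrans_min_add_max.
have := RintegralD measurableT (iG _ minc) (iG _ maxc).
have := RintegralD measurableT (iG _ phi1c) (iG _ phi2c).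
(* Locking [Rintegral] keeps [lra] from unfolding the integrals when comparing atoms. *)
move: e1 e2 g; rewrite /Rdual_fun [Rintegral]lock; lra.
Qed.

Lemma dual_min_max_eq_UT :
  dual_fun h0 h1 c mu1 nu phi1 = UT h0 h1 c mu1 nu ->
  dual_fun h0 h1 c mu2 nu phi2 = UT h0 h1 c mu2 nu ->
  [/\ dual_fun h0 h1 c mu1 nu phi_min = UT h0 h1 c mu1 nu,
      dual_fun h0 h1 c mu2 nu phi_max = UT h0 h1 c mu2 nu &
      \int[mu2]_x gap x <= \int[mu1]_x gap x].
Proof.
move=> UT1 UT2.
have E mu phi (phic : continuous phi) :=
  Rdual_funE mu nu cX cY cc h0_entropy h1_entropy phic.
have W1 := dual_fun_le_UT mu1 nu cX cY cc h0_entropy h1_entropy minc.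
rewrite -UT1 (E mu1 _ minc) (E mu1 _ phi1c) lee_fin in W1.
have W2 := dual_fun_le_UT mu2 nu cX cY cc h0_entropy h1_entropy maxc.
rewrite -UT2 (E mu2 _ maxc) (E mu2 _ phi2c) lee_fin in W2.
have gap_le := le_Rintegral_on mle (integrable_gap mu1) (integrable_gap mu2) gap_ge0 gap_offU.
rewrite -UT1 -UT2 (E mu1 _ minc) (E mu1 _ phi1c) (E mu2 _ maxc) (E mu2 _ phi2c).
move: Rdual_min_add_max gap_le W1 W2; rewrite [Rdual_fun]lock [Rintegral]lock.
by move=> lattice gap_le W1 W2; split; [congr EFin | congr EFin |]; lra.
Qed.

Lemma lattice_gap_eq0_on_signed_support :
  \int[mu2]_x gap x <= \int[mu1]_x gap x ->
  forall x, signed_support mu1 mu2 x -> gap x = 0.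
Proof. exact: eq0_on_signed_support mle continuous_gap _ _ gap_ge0 gap_offU. Qed.

Lemma lattice_gap_eq0_le x : gap x = 0 ->
  - conj_fun h0 (- phi1 x) <= - conj_fun h0 (- phi2 x).
Proof.
have [le12|/ltW le21] := leP (phi1 x) (phi2 x).
  by move=> _; rewrite lerN2 le_conj_fun // lerN2.
by rewrite /gap /phi_min min_r // => /eqP; rewrite subr_eq0 => /eqP ->.
Qed.

End dual_lattice.

Theorem theorem3p19 (R : realType) (X Y : pmetricType R)
    (c : X * Y -> R) (h0 h1 : R -> R)
    (mu1 mu2 : {finite_measure set borel X -> \bar R})
    (nu : {finite_measure set borel Y -> \bar R})
    (phi1 phi2 : X -> R) (U : set (borel X)) :
  compact [set: X] -> compact [set: Y] -> continuous c ->
  entropy_fun h0 -> entropy_fun h1 ->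
  Phi h0 h1 c mu1 nu phi1 -> Phi h0 h1 c mu2 nu phi2 ->
  measurable U ->
  measure_le_on mu1 mu2 U ->
  (forall x, ~ U x -> phi1 x <= phi2 x) ->
  [/\ Phi h0 h1 c mu1 nu (fun x => Num.min (phi1 x) (phi2 x)),
      Phi h0 h1 c mu2 nu (fun x => Num.max (phi1 x) (phi2 x)) &
      forall x, signed_support mu1 mu2 x ->
        - conj_fun h0 (- phi1 x) <= - conj_fun h0 (- phi2 x)].
Proof.
move=> cX cY cc h0e h1e [phi1c UT1] [phi2c UT2] _ mle le_offU.
have [UT_min UT_max gap_le] :=
  dual_min_max_eq_UT cX cY cc h0e h1e phi1c phi2c mle le_offU UT1 UT2.
split; [split=> //; exact: min_fun_continuous | split=> //; exact: max_fun_continuous |].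
move=> x /(lattice_gap_eq0_on_signed_support cX h0e phi1c phi2c mle le_offU gap_le).
exact: lattice_gap_eq0_le.
Qed.
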